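(* The twisted torus $L_\gamma$ is Hamiltonian stationary if and only if the function $\rho|H|$ is constant on the torus (where $\rho$ is regarded as the function $(\alpha,\beta)\mapsto\rho(\beta)$).
   Context: Let $\gamma:\mathbb{R}/2\pi\mathbb{Z}\to\mathbb{C}\setminus\{0\}$ be a smooth regular simple closed curve written as $\gamma(\beta)=\rho(\beta)e^{if(\beta)}$ with $\rho>0$ smooth and $2\pi$-periodic and $f$ smooth with $f(\beta+2\pi)=f(\beta)+2k\pi$, $k\in\mathbb{Z}$. The twisted torus $L_\gamma$ is the image of the Lagrangian immersion $F(\alpha,\beta)=\frac{\rho(\beta)}{\sqrt2}\left(e^{i(f(\beta)+\alpha)},e^{i(f(\beta)-\alpha)}\right)$ into $\mathbb{C}^2$ (Euclidean metric, complex structure $J$ = multiplication by $i$). $g$ is the induced metric, $H$ the mean curvature vector ($g$-trace of the second fundamental form, no normalizing factor), $|H|$ its Euclidean length. $L_\gamma$ is Hamiltonian stationary if it is a critical point of area under all variations with variation field $J\nabla h$, $h\in C^\infty(L_\gamma)$; equivalently (Oh) $\mathrm{div}_g(JH)=0$. *)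

From Stdlib Require Import Reals ZArith.
From Coquelicot Require Import Coquelicot.
Open Scope R_scope.

(** Vectors of C^2 = R^4, coordinates (Re z1, Im z1, Re z2, Im z2). *)
Record vec4 := mkV { c1 : R; c2 : R; c3 : R; c4 : R }.

Definition vadd (u v : vec4) : vec4 :=
  mkV (c1 u + c1 v) (c2 u + c2 v) (c3 u + c3 v) (c4 u + c4 v).
Definition vscal (s : R) (u : vec4) : vec4 :=
  mkV (s * c1 u) (s * c2 u) (s * c3 u) (s * c4 u).
Definition vsub (u v : vec4) : vec4 := vadd u (vscal (-1) v).
Definition dot (u v : vec4) : R :=
  c1 u * c1 v + c2 u * c2 v + c3 u * c3 v + c4 u * c4 v.
Definition vnorm (u : vec4) : R := sqrt (dot u u).
(** Complex structure J = multiplication by i on each factor. *)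
Definition Jv (u : vec4) : vec4 := mkV (- c2 u) (c1 u) (- c4 u) (c3 u).

Definition pa (V : R -> R -> vec4) (a b : R) : vec4 :=
  mkV (Derive (fun x => c1 (V x b)) a) (Derive (fun x => c2 (V x b)) a)
      (Derive (fun x => c3 (V x b)) a) (Derive (fun x => c4 (V x b)) a).
Definition pb (V : R -> R -> vec4) (a b : R) : vec4 :=
  mkV (Derive (fun y => c1 (V a y)) b) (Derive (fun y => c2 (V a y)) b)
      (Derive (fun y => c3 (V a y)) b) (Derive (fun y => c4 (V a y)) b).

Section Geometry.
Variable F : R -> R -> vec4.

Definition g11 a b := dot (pa F a b) (pa F a b).
Definition g12 a b := dot (pa F a b) (pb F a b).
Definition g22 a b := dot (pb F a b) (pb F a b).
Definition detg a b := g11 a b * g22 a b - g12 a b ^ 2.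
Definition gi11 a b := g22 a b / detg a b.
Definition gi12 a b := - g12 a b / detg a b.
Definition gi22 a b := g11 a b / detg a b.

Definition tangent_part (a b : R) (v : vec4) : vec4 :=
  let ca := gi11 a b * dot v (pa F a b) + gi12 a b * dot v (pb F a b) in
  let cb := gi12 a b * dot v (pa F a b) + gi22 a b * dot v (pb F a b) in
  vadd (vscal ca (pa F a b)) (vscal cb (pb F a b)).
Definition perp (a b : R) (v : vec4) : vec4 := vsub v (tangent_part a b v).

(** Mean curvature vector H = g^{ij} II(d_i, d_j), II(d_i,d_j) = (d_i d_j F)^perp
    (trace, no normalizing factor). *)
Definition meanH (a b : R) : vec4 :=
  vadd (vscal (gi11 a b) (perp a b (pa (pa F) a b)))
  (vadd (vscal (2 * gi12 a b) (perp a b (pb (pa F) a b)))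
        (vscal (gi22 a b) (perp a b (pb (pb F) a b)))).

(** Divergence (w.r.t. g) of a vector field V along the immersion:
    div_g V = g^{ij} <d_i V, d_j F>; for V tangent this is the intrinsic
    Riemannian divergence. *)
Definition div_g (V : R -> R -> vec4) (a b : R) : R :=
  gi11 a b * dot (pa V a b) (pa F a b)
  + gi12 a b * (dot (pa V a b) (pb F a b) + dot (pb V a b) (pa F a b))
  + gi22 a b * dot (pb V a b) (pb F a b).

(** Hamiltonian stationary, in Oh's form div_g (J H) = 0. *)
Definition hamiltonian_stationary : Prop :=
  forall a b, div_g (fun a' b' => Jv (meanH a' b')) a b = 0.
End Geometry.

Definition smooth (h : R -> R) : Prop :=
  forall (n : nat) (x : R), ex_derive (Derive_n h n) x.

Definition twisted_torus (rho f : R -> R) (a b : R) : vec4 :=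
  let r := rho b / sqrt 2 in
  mkV (r * cos (f b + a)) (r * sin (f b + a)) (r * cos (f b - a)) (r * sin (f b - a)).

Definition gamma_re (rho f : R -> R) (b : R) := rho b * cos (f b).
Definition gamma_im (rho f : R -> R) (b : R) := rho b * sin (f b).

From Stdlib Require Import Reals ZArith Psatz.
From Coquelicot Require Import Coquelicot.
Open Scope R_scope.

(* In the orthonormal frame e1 = (e^{i(f+α)}, e^{i(f-α)})/√2, e2 = J e1,
   e3 = (i e^{i(f+α)}, -i e^{i(f-α)})/√2, e4 = J e3, which rotates with α and β,
   every geometric quantity of the twisted torus has coordinates depending on β
   only: ∂_α F = ρ e3 and ∂_β F = ρ' e1 + ρ f' e2, so g = diag(ρ², |γ'|²), and
   J H = κ ∂_β F for an explicit function κ(β). Hence ρ|H| = |P| with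
   P = ρ |γ'| κ = √(det g) κ, while div_g (κ ∂_β F) = P' / √(det g).
   So L_γ is Hamiltonian stationary iff P' = 0 iff |P| is constant. *)

(* Coordinates (x, y, z, t) in the frame e1, ..., e4 with f(β) = th and α = a. *)
Definition frame (th a x y z t : R) : vec4 :=
  let s := / sqrt 2 in
  mkV (s * (x * cos (th + a) - y * sin (th + a) - z * sin (th + a) - t * cos (th + a)))
      (s * (x * sin (th + a) + y * cos (th + a) + z * cos (th + a) - t * sin (th + a)))
      (s * (x * cos (th - a) - y * sin (th - a) + z * sin (th - a) + t * cos (th - a)))
      (s * (x * sin (th - a) + y * cos (th - a) - z * cos (th - a) + t * sin (th - a))).

Lemma frame_eq th a x y z t x' y' z' t' :
  x = x' -> y = y' -> z = z' -> t = t' -> frame th a x y z t = frame th a x' y' z' t'.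
Proof. intros; subst; reflexivity. Qed.

Lemma vadd_frame th a x y z t x' y' z' t' :
  vadd (frame th a x y z t) (frame th a x' y' z' t')
  = frame th a (x + x') (y + y') (z + z') (t + t').
Proof. unfold vadd, frame; simpl; f_equal; ring. Qed.

Lemma vscal_frame th a k x y z t :
  vscal k (frame th a x y z t) = frame th a (k * x) (k * y) (k * z) (k * t).
Proof. unfold vscal, frame; simpl; f_equal; ring. Qed.

Lemma vsub_frame th a x y z t x' y' z' t' :
  vsub (frame th a x y z t) (frame th a x' y' z' t')
  = frame th a (x - x') (y - y') (z - z') (t - t').
Proof. unfold vsub; rewrite vscal_frame, vadd_frame; apply frame_eq; ring. Qed.

Lemma Jv_frame th a x y z t : Jv (frame th a x y z t) = frame th a (- y) x (- t) z.
Proof. unfold Jv, frame; simpl; f_equal; ring. Qed.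

Lemma dot_frame th a x y z t x' y' z' t' :
  dot (frame th a x y z t) (frame th a x' y' z' t') = x * x' + y * y' + z * z' + t * t'.
Proof.
  unfold dot, frame; simpl.
  assert (E1 := sin2_cos2 (th + a)); assert (E2 := sin2_cos2 (th - a)).
  assert (S : / sqrt 2 * / sqrt 2 = / 2) by (rewrite <- Rinv_mult, sqrt_sqrt; lra).
  unfold Rsqr in *.
  transitivity (/ sqrt 2 * / sqrt 2 *
    ((sin (th + a) * sin (th + a) + cos (th + a) * cos (th + a))
       * ((x - t) * (x' - t') + (y + z) * (y' + z'))
   + (sin (th - a) * sin (th - a) + cos (th - a) * cos (th - a))
       * ((x + t) * (x' + t') + (y - z) * (y' - z')))); [ring |].
  rewrite E1, E2, S; field.
Qed.

Lemma dot_Jv u v : dot (Jv u) (Jv v) = dot u v.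
Proof. unfold dot, Jv; simpl; ring. Qed.

Lemma vnorm_Jv u : vnorm (Jv u) = vnorm u.
Proof. unfold vnorm; rewrite dot_Jv; reflexivity. Qed.

Lemma vnorm_vscal s u : vnorm (vscal s u) = Rabs s * vnorm u.
Proof.
  unfold vnorm.
  replace (dot (vscal s u) (vscal s u)) with (Rsqr s * dot u u)
    by (unfold dot, vscal, Rsqr; simpl; ring).
  rewrite sqrt_mult_alt, sqrt_Rsqr_abs by apply Rle_0_sqr; reflexivity.
Qed.

(* auto_derive leaves [Derive (fun x => g x)], which [ring] does not identify
   with [Derive g]. *)
Ltac eta_Derive :=
  repeat match goal with
  | |- context [Derive (fun x => ?g x)] => change (fun x => g x) with g
  end.

Lemma pa_ext (V W : R -> R -> vec4) a b :
  (forall a b, V a b = W a b) -> pa V a b = pa W a b.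
Proof.
  intros HVW; unfold pa; f_equal; apply Derive_ext; intros; rewrite HVW; reflexivity.
Qed.

Lemma pb_ext (V W : R -> R -> vec4) a b :
  (forall a b, V a b = W a b) -> pb V a b = pb W a b.
Proof.
  intros HVW; unfold pb; f_equal; apply Derive_ext; intros; rewrite HVW; reflexivity.
Qed.

Lemma pa_frame (th x y z t : R -> R) a b :
  pa (fun a b => frame (th b) a (x b) (y b) (z b) (t b)) a b
  = frame (th b) a (- z b) (- t b) (x b) (y b).
Proof.
  unfold pa, frame; simpl; f_equal;
    apply is_derive_unique; auto_derive; try exact I; unfold Rminus; ring.
Qed.

Lemma pb_frame (th x y z t : R -> R) a b :
  ex_derive th b -> ex_derive x b -> ex_derive y b -> ex_derive z b -> ex_derive t b ->
  pb (fun a b => frame (th b) a (x b) (y b) (z b) (t b)) a b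
  = frame (th b) a (Derive x b - Derive th b * y b) (Derive y b + Derive th b * x b)
                   (Derive z b - Derive th b * t b) (Derive t b + Derive th b * z b).
Proof.
  intros; unfold pb, frame; simpl; f_equal;
    apply is_derive_unique; auto_derive; try tauto; eta_Derive; unfold Rminus; ring.
Qed.

Section TwistedTorus.
Variables rho f : R -> R.
Hypotheses (ex_rho : forall b, ex_derive rho b)
  (ex_rho' : forall b, ex_derive (Derive rho) b)
  (ex_f : forall b, ex_derive f b)
  (ex_f' : forall b, ex_derive (Derive f) b).

Let F := twisted_torus rho f.

Lemma twisted_torus_frame a b : F a b = frame (f b) a (rho b) 0 0 0.
Proof. unfold F, twisted_torus, frame; simpl; f_equal; unfold Rdiv; ring. Qed.

Lemma pa_F a b : pa F a b = frame (f b) a 0 0 (rho b) 0.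
Proof.
  rewrite (pa_ext _ _ a b twisted_torus_frame).
  rewrite (pa_frame f rho (fun _ => 0) (fun _ => 0) (fun _ => 0)); apply frame_eq; ring.
Qed.

Lemma pb_F a b : pb F a b = frame (f b) a (Derive rho b) (rho b * Derive f b) 0 0.
Proof.
  rewrite (pb_ext _ _ a b twisted_torus_frame).
  rewrite (pb_frame f rho (fun _ => 0) (fun _ => 0) (fun _ => 0));
    auto using ex_derive_const.
  rewrite !Derive_const; apply frame_eq; ring.
Qed.

Lemma paa_F a b : pa (pa F) a b = frame (f b) a (- rho b) 0 0 0.
Proof.
  rewrite (pa_ext _ _ a b pa_F).
  rewrite (pa_frame f (fun _ => 0) (fun _ => 0) rho (fun _ => 0)); apply frame_eq; ring.
Qed.

Lemma pba_F a b : pb (pa F) a b = frame (f b) a 0 0 (Derive rho b) (rho b * Derive f b).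
Proof.
  rewrite (pb_ext _ _ a b pa_F).
  rewrite (pb_frame f (fun _ => 0) (fun _ => 0) rho (fun _ => 0));
    auto using ex_derive_const.
  rewrite !Derive_const; apply frame_eq; ring.
Qed.

Lemma pbb_F a b : pb (pb F) a b =
  frame (f b) a (Derive (Derive rho) b - rho b * Derive f b ^ 2)
                (2 * Derive rho b * Derive f b + rho b * Derive (Derive f) b) 0 0.
Proof.
  rewrite (pb_ext _ _ a b pb_F).
  rewrite (pb_frame f (Derive rho) (fun y => rho y * Derive f y) (fun _ => 0) (fun _ => 0));
    auto using ex_derive_const, ex_derive_mult.
  rewrite !Derive_const, Derive_mult by auto; apply frame_eq; ring.
Qed.

Definition speed2 b := Derive rho b ^ 2 + (rho b * Derive f b) ^ 2.

Lemma speed2_gamma b :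
  speed2 b = Derive (gamma_re rho f) b ^ 2 + Derive (gamma_im rho f) b ^ 2.
Proof.
  assert (Dre : Derive (gamma_re rho f) b
                = Derive rho b * cos (f b) - rho b * Derive f b * sin (f b)).
  { apply is_derive_unique; unfold gamma_re; auto_derive; auto; eta_Derive; ring. }
  assert (Dim : Derive (gamma_im rho f) b
                = Derive rho b * sin (f b) + rho b * Derive f b * cos (f b)).
  { apply is_derive_unique; unfold gamma_im; auto_derive; auto; eta_Derive; ring. }
  assert (E := sin2_cos2 (f b)); unfold Rsqr in E.
  rewrite Dre, Dim; unfold speed2.
  transitivity ((Derive rho b ^ 2 + (rho b * Derive f b) ^ 2)
                * (sin (f b) * sin (f b) + cos (f b) * cos (f b))); [rewrite E |]; ring.
Qed.

Lemma speed2_pos_of_regular b :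
  Derive (gamma_re rho f) b <> 0 \/ Derive (gamma_im rho f) b <> 0 -> 0 < speed2 b.
Proof.
  intros Hreg; rewrite speed2_gamma.
  destruct Hreg as [H | H]; apply pow2_gt_0 in H;
    [assert (P := pow2_ge_0 (Derive (gamma_im rho f) b))
    | assert (P := pow2_ge_0 (Derive (gamma_re rho f) b))]; lra.
Qed.

Lemma g11_F a b : g11 F a b = rho b ^ 2.
Proof. unfold g11; rewrite pa_F, dot_frame; ring. Qed.

Lemma g12_F a b : g12 F a b = 0.
Proof. unfold g12; rewrite pa_F, pb_F, dot_frame; ring. Qed.

Lemma g22_F a b : g22 F a b = speed2 b.
Proof. unfold g22, speed2; rewrite pb_F, dot_frame; ring. Qed.

Definition hcoef b :=
  (rho b * Derive (Derive rho) b * Derive f b - rho b * Derive rho b * Derive (Derive f) b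
   - 3 * Derive rho b ^ 2 * Derive f b - 2 * rho b ^ 2 * Derive f b ^ 3) / speed2 b ^ 2.

Lemma Jv_meanH_F a b : rho b <> 0 -> speed2 b <> 0 ->
  Jv (meanH F a b) = vscal (hcoef b) (pb F a b).
Proof.
  intros Hrho Hq.
  unfold meanH, perp, tangent_part, gi11, gi12, gi22, detg; cbv zeta.
  rewrite paa_F, pba_F, pbb_F, !pa_F, !pb_F, g11_F, g12_F, g22_F.
  repeat rewrite ?dot_frame, ?vscal_frame, ?vsub_frame, ?vadd_frame.
  rewrite Jv_frame; unfold hcoef; unfold speed2 in *.
  apply frame_eq; field; split; auto; intro E; apply Hq; rewrite <- E; ring.
Qed.

Definition area_density b := rho b * sqrt (speed2 b).

Lemma ex_derive_speed2 b : ex_derive speed2 b.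
Proof. unfold speed2; auto_derive; auto. Qed.

Lemma Derive_speed2 b : Derive speed2 b =
  2 * Derive rho b * Derive (Derive rho) b
  + 2 * (rho b * Derive f b) * (Derive rho b * Derive f b + rho b * Derive (Derive f) b).
Proof. apply is_derive_unique; unfold speed2; auto_derive; auto; eta_Derive; ring. Qed.

Lemma div_g_F_scal_pb (V : R -> R -> vec4) (u : R -> R) a b :
  0 < rho b -> 0 < speed2 b -> ex_derive u b ->
  (forall a b, V a b = vscal (u b) (pb F a b)) ->
  div_g F V a b = Derive (fun y => area_density y * u y) b / area_density b.
Proof.
  intros Hrho Hq Hu HV.
  assert (HVf : forall a b, V a b =
    frame (f b) a (u b * Derive rho b) (u b * (rho b * Derive f b)) 0 0)
    by (intros; rewrite HV, pb_F, vscal_frame; apply frame_eq; ring).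
  assert (Dx : Derive (fun y => u y * Derive rho y) b
               = Derive u b * Derive rho b + u b * Derive (Derive rho) b)
    by (apply is_derive_unique; auto_derive; auto; eta_Derive; ring).
  assert (Dy : Derive (fun y => u y * (rho y * Derive f y)) b
               = Derive u b * (rho b * Derive f b)
                 + u b * (Derive rho b * Derive f b + rho b * Derive (Derive f) b))
    by (apply is_derive_unique; auto_derive; auto; eta_Derive; ring).
  assert (Darea : Derive (fun y => area_density y * u y) b
    = Derive rho b * sqrt (speed2 b) * u b
      + rho b * (Derive speed2 b / (2 * sqrt (speed2 b))) * u b
      + rho b * sqrt (speed2 b) * Derive u b).
  { apply is_derive_unique; unfold area_density; auto_derive.
    - repeat split; auto using ex_derive_speed2.
    - eta_Derive; field; apply Rgt_not_eq, sqrt_lt_R0; exact Hq. }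
  unfold div_g, gi11, gi12, gi22, detg.
  rewrite (pa_ext _ _ a b HVf), (pb_ext _ _ a b HVf), pa_frame, pb_frame;
    auto using ex_derive_const, ex_derive_mult.
  rewrite pa_F, pb_F, !dot_frame, !Derive_const, g11_F, g12_F, g22_F, Dx, Dy, Darea.
  (* both sides equal u (ln √(det g))' + u' *)
  transitivity (Derive rho b / rho b * u b + Derive speed2 b / (2 * speed2 b) * u b
                + Derive u b).
  - rewrite Derive_speed2; unfold speed2 in *; field; lra.
  - assert (HS : sqrt (speed2 b) * sqrt (speed2 b) = speed2 b) by (apply sqrt_sqrt; lra).
    assert (HS0 : 0 < sqrt (speed2 b)) by (apply sqrt_lt_R0; exact Hq).
    unfold area_density; set (S := sqrt (speed2 b)) in *; rewrite <- HS; field; lra.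
Qed.

Hypotheses (ex_rho'' : forall b, ex_derive (Derive (Derive rho)) b)
  (ex_f'' : forall b, ex_derive (Derive (Derive f)) b)
  (rho_pos : forall b, 0 < rho b) (speed2_pos : forall b, 0 < speed2 b).

Lemma ex_derive_hcoef b : ex_derive hcoef b.
Proof.
  assert (Hq := speed2_pos b); unfold hcoef; auto_derive.
  repeat split; auto using ex_derive_speed2; apply Rgt_not_eq; nra.
Qed.

Definition hcoef_density b := area_density b * hcoef b.

Lemma ex_derive_hcoef_density b : ex_derive hcoef_density b.
Proof.
  assert (Hq := speed2_pos b); unfold hcoef_density, area_density; auto_derive.
  repeat split; auto using ex_derive_speed2, ex_derive_hcoef.
Qed.

Lemma rho_vnorm_meanH_F a b : rho b * vnorm (meanH F a b) = Rabs (hcoef_density b).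
Proof.
  assert (Hrho := rho_pos b); assert (Hq := speed2_pos b).
  rewrite <- vnorm_Jv, Jv_meanH_F, vnorm_vscal by lra.
  replace (vnorm (pb F a b)) with (sqrt (speed2 b))
    by (unfold vnorm, speed2; rewrite pb_F, dot_frame; f_equal; ring).
  unfold hcoef_density, area_density.
  rewrite Rabs_mult, (Rabs_pos_eq (rho b * _)); [ring |].
  apply Rmult_le_pos; [lra | apply sqrt_pos].
Qed.

Lemma div_g_JmeanH_F a b :
  div_g F (fun a b => Jv (meanH F a b)) a b = Derive hcoef_density b / area_density b.
Proof.
  apply div_g_F_scal_pb; auto using ex_derive_hcoef.
  intros; apply Jv_meanH_F; apply Rgt_not_eq; [apply rho_pos | apply speed2_pos].
Qed.

Lemma hamiltonian_stationary_twisted_torus :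
  hamiltonian_stationary F <-> forall b, Derive hcoef_density b = 0.
Proof.
  assert (Harea : forall b, 0 < area_density b)
    by (intro b; apply Rmult_lt_0_compat, sqrt_lt_R0; auto).
  unfold hamiltonian_stationary; setoid_rewrite div_g_JmeanH_F.
  split; intros H b.
  - assert (Hb := Harea b).
    replace (Derive hcoef_density b)
      with (Derive hcoef_density b / area_density b * area_density b) by (field; lra).
    rewrite (H 0 b); ring.
  - intros; rewrite H; unfold Rdiv; ring.
Qed.

End TwistedTorus.

Lemma Derive_eq0_iff_Rabs_const (P : R -> R) :
  (forall x, ex_derive P x) ->
  (forall x, Derive P x = 0) <-> exists c, forall x, Rabs (P x) = c.
Proof.
  intros HP; split.
  - intros H0; exists (Rabs (P 0)); intros x; f_equal.
    assert (HD : forall t, is_derive P t 0)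
      by (intros t; rewrite <- (H0 t); apply Derive_correct, HP).
    destruct (Rtotal_order x 0) as [Hx | [-> | Hx]].
    + apply (eq_is_derive P x 0); auto.
    + reflexivity.
    + symmetry; apply (eq_is_derive P 0 x); auto.
  - intros [c Hc] x.
    assert (Hsq : forall y, P y * P y = c * c)
      by (intros y; rewrite <- (Hc y), <- Rabs_mult, Rabs_pos_eq by apply Rle_0_sqr; reflexivity).
    assert (E : Derive (fun y => P y * P y) x = 0)
      by (rewrite (Derive_ext _ (fun _ => c * c)) by apply Hsq; apply Derive_const).
    rewrite Derive_mult in E by apply HP.
    destruct (Req_dec (P x) 0) as [Hx | Hx].
      rewrite (Derive_ext _ (fun _ => 0)); [apply Derive_const |].
      intros t; apply Rabs_eq_0; rewrite Hc, <- (Hc x), Hx; apply Rabs_R0.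
    + apply (Rmult_eq_reg_l (2 * P x)); lra.
Qed.

Theorem mainTheorem6 (rho f : R -> R) (k : Z)
  (rho_smooth : smooth rho) (f_smooth : smooth f)
  (rho_pos : forall b, 0 < rho b)
  (rho_per : forall b, rho (b + 2 * PI) = rho b)
  (f_per : forall b, f (b + 2 * PI) = f b + 2 * IZR k * PI)
  (* gamma is regular *)
  (gamma_regular : forall b,
     Derive (gamma_re rho f) b <> 0 \/ Derive (gamma_im rho f) b <> 0)
  (* gamma is simple on one period *)
  (gamma_simple : forall b1 b2, 0 <= b1 < 2 * PI -> 0 <= b2 < 2 * PI ->
     gamma_re rho f b1 = gamma_re rho f b2 ->
     gamma_im rho f b1 = gamma_im rho f b2 -> b1 = b2) :
  hamiltonian_stationary (twisted_torus rho f) <->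
  exists c : R, forall a b : R,
    rho b * vnorm (meanH (twisted_torus rho f) a b) = c.
Proof.
  assert (ex_rho := rho_smooth 0%nat); assert (ex_rho' := rho_smooth 1%nat);
  assert (ex_rho'' := rho_smooth 2%nat); assert (ex_f := f_smooth 0%nat);
  assert (ex_f' := f_smooth 1%nat); assert (ex_f'' := f_smooth 2%nat); simpl in *.
  assert (speed2_pos : forall b, 0 < speed2 rho f b)
    by (intros b; apply speed2_pos_of_regular; auto).
  assert (Hnorm : forall a b, rho b * vnorm (meanH (twisted_torus rho f) a b)
                              = Rabs (hcoef_density rho f b))
    by (intros; apply rho_vnorm_meanH_F; auto).
  rewrite hamiltonian_stationary_twisted_torus, Derive_eq0_iff_Rabs_const
    by auto using ex_derive_hcoef_density.
  setoid_rewrite Hnorm.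
  split; intros [c Hc]; exists c; [intros; apply Hc | intros b; apply (Hc 0)].
Qed.
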